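(* Let $u$ be a non-negative configuration on $K_{m,n}$ and suppose $u_{b_i}=0$ for some $b_i\in B_n$. Then there exists a proof $g$ for the rank of $u$ with $g_{b_i}>0$.
   Context: Let $m,n\ge 1$. $K_{m,n}$ is the complete bipartite graph with vertex set $V=A_m\sqcup B_n$, $A_m=\{a_1,\dots,a_m\}$, $B_n=\{b_1,\dots,b_n\}$, with exactly one edge $\{a_i,b_j\}$ for every $i,j$; $a_m$ is the sink. A configuration is a function $u:V\to\mathbb Z$; it is non-negative if all values are $\ge0$; $\mathrm{degree}(u)=\sum_c u_c$. For $c\in V$ with graph degree $d_c$, $\Delta^{(c)}=d_c e_c-\sum_{c'\text{ adjacent to }c}e_{c'}$, with $e_c$ the indicator configuration of $c$. Two configurations are toppling equivalent if their difference is an integer combination of the $\Delta^{(c)}$. A configuration is effective if toppling equivalent to a non-negative configuration. $\mathrm{rank}(u)=-1+\min\{\mathrm{degree}(f): f\ge 0,\ u-f\text{ not effective}\}$. A proof for the rank of $u$ is a non-negative $f$ with $u-f$ not effective and $\mathrm{degree}(f)=\mathrm{rank}(u)+1$. *)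

From mathcomp Require Import all_boot all_order all_algebra.
Set Implicit Arguments. Unset Strict Implicit. Unset Printing Implicit Defensive.
Import Order.TTheory GRing.Theory Num.Theory.
Local Open Scope ring_scope.

(* Vertex set V = A_m ⊔ B_n: inl i is a_{i+1}, inr j is b_{j+1}. *)
Definition Kvert (m n : nat) : finType := ('I_m + 'I_n)%type.

Definition Kadj (m n : nat) (x y : Kvert m n) : bool :=
  match x, y with
  | inl _, inr _ => true
  | inr _, inl _ => true
  | _, _ => false
  end.

Definition Kdeg (m n : nat) (c : Kvert m n) : nat := #|[pred c' | Kadj c c']|.

Definition config (m n : nat) := Kvert m n -> int.

Definition Delta (m n : nat) (c : Kvert m n) : config m n :=
  fun x => (if x == c then (Kdeg c)%:Z else 0) - (if Kadj c x then 1 else 0).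

Definition nonneg (m n : nat) (u : config m n) : Prop := forall x, 0 <= u x.

Definition degree (m n : nat) (u : config m n) : int := \sum_(x : Kvert m n) u x.

Definition csub (m n : nat) (u v : config m n) : config m n := fun x => u x - v x.

Definition toppling_equiv (m n : nat) (u v : config m n) : Prop :=
  exists z : Kvert m n -> int,
    forall x, u x - v x = \sum_(c : Kvert m n) z c * Delta c x.

Definition effective (m n : nat) (u : config m n) : Prop :=
  exists f : config m n, nonneg f /\ toppling_equiv u f.

Definition rank_is (m n : nat) (u : config m n) (r : int) : Prop :=
  (exists f : config m n, nonneg f /\ ~ effective (csub u f) /\ degree f = r + 1) /\
  (forall f : config m n, nonneg f -> ~ effective (csub u f) -> r + 1 <= degree f).

Definition rank_proof (m n : nat) (u g : config m n) : Prop :=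
  nonneg g /\ ~ effective (csub u g) /\
  exists r : int, rank_is u r /\ degree g = r + 1.

From mathcomp Require Import all_boot all_order all_algebra perm zify ring.
From Stdlib Require Import Classical Wf_nat.
Set Implicit Arguments. Unset Strict Implicit. Unset Printing Implicit Defensive.
Import Order.TTheory GRing.Theory Num.Theory.
Local Open Scope ring_scope.

(* Effectiveness on K_{m,n} is decided by the total numbers s, t of firings of
   the two sides: D is effective iff s <= sum_i floor((D a_i + t) / n) and
   t <= sum_j floor((D b_j + s) / m) for some s, t.  With this criterion one
   shows that if D is not effective but D + a is, then D + a - b is not
   effective for a suitable b in B: a chip of a least-degree rank proof can be
   moved from A to B.  Given such a proof with a chip on b, either b = b_i, or
   u b = 0 and swapping b with b_i is an automorphism fixing u, or u b > 0 and
   induction on the degree of u - b gives a proof positive on b_i, to which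
   the chip on b is added back. *)

Section FloorSum.
Variable d : nat.
Hypothesis d_gt0 : (0 < d)%N.

Lemma divzS (x : int) : ((x + 1) %/ d)%Z = (x %/ d)%Z + (d %| x + 1)%Z%:R.
Proof.
have dP : 0 < d%:Z by rewrite ltz_nat.
have dN0 : d%:Z != 0 by rewrite gt_eqF.
move: (x + 1) (addrK 1 x) => y <-.
have yE := divz_eq y d; have r_ge0 := modz_ge0 y dN0; have r_lt := ltz_pmod y dP.
have small r : 0 <= r < d%:Z -> (r %/ d)%Z = 0 by move=> hr; rewrite divz_small ?gtz0_abs.
case: (boolP (d %| y)%Z) => [/dvdz_mod0P r0 | /dvdz_mod0P r0] /=.
  have -> : y - 1 = ((y %/ d)%Z - 1) * d + (d%:Z - 1) by rewrite {1}yE r0; ring.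
  by rewrite divzMDl // (small (d%:Z - 1)); lia.
have -> : y - 1 = (y %/ d)%Z * d + ((y %% d)%Z - 1) by rewrite {1}yE; ring.
by rewrite divzMDl // (small (_ - 1)); lia.
Qed.

Variable k : nat.

Definition floor_sum (v : 'I_k -> int) (t : int) : int :=
  \sum_(i < k) ((v i + t) %/ d)%Z.

Lemma floor_sum_le (v w : 'I_k -> int) t t' :
  (forall i, v i + t <= w i + t') -> floor_sum v t <= floor_sum w t'.
Proof. by move=> vw; apply: ler_sum => i _; apply: lez_pdiv2r. Qed.

Lemma floor_sumDM (v : 'I_k -> int) (t q : int) :
  floor_sum v (t + q * d) = floor_sum v t + q * k.
Proof.
have dN0 : d%:Z != 0 by rewrite eqz_nat -lt0n.
have -> : q * k = \sum_(i < k) q by rewrite sumr_const card_ord -mulr_natr natz.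
rewrite /floor_sum -big_split /=.
apply: eq_bigr => i _; rewrite addrA [_ + q * d]addrC divzMDl //; exact: addrC.
Qed.

Lemma floor_sum_incr (v w : 'I_k -> int) i t :
  w i = v i + 1 -> (forall j, j != i -> w j = v j) ->
  floor_sum w t = floor_sum v t + (d %| v i + t + 1)%Z%:R.
Proof.
move=> wi wj; rewrite /floor_sum (bigD1 i) // [in RHS](bigD1 i) //= wi addrAC divzS.
by under eq_bigr => j ji do rewrite (wj j ji); ring.
Qed.

Lemma floor_sum_jump (v : 'I_k -> int) t :
  floor_sum v t < floor_sum v (t + 1) -> exists i, (d %| v i + t + 1)%Z.
Proof.
case: (boolP [exists i, d %| v i + t + 1]%Z) => [/existsP // | /existsPn nodiv].
suff -> : floor_sum v (t + 1) = floor_sum v t by rewrite ltxx.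
by apply: eq_bigr => i _; rewrite addrA divzS (negbTE (nodiv i)) addr0.
Qed.
End FloorSum.

Section CompleteBipartite.
Variables m n : nat.
Implicit Types (D f g h u : config m n) (z : Kvert m n -> int).

Definition chip (c : Kvert m n) : config m n := fun x => (x == c)%:R.

Definition laplacian z : config m n := fun x => \sum_(c : Kvert m n) z c * Delta c x.

Definition floorA D (t : int) : int := floor_sum n (fun i => D (inl i)) t.
Definition floorB D (s : int) : int := floor_sum m (fun j => D (inr j)) s.

Lemma inl_eq (i k : 'I_m) : (inl i == inl k :> Kvert m n) = (i == k).
Proof. by apply/eqP/eqP => [[]|->]. Qed.

Lemma inr_eq (j k : 'I_n) : (inr j == inr k :> Kvert m n) = (j == k).
Proof. by apply/eqP/eqP => [[]|->]. Qed.

Lemma Kdeg_inl (i : 'I_m) : Kdeg (inl i : Kvert m n) = n.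
Proof.
by rewrite /Kdeg -sum1_card big_sumType /= big_pred0 // add0n sum1_card card_ord.
Qed.

Lemma Kdeg_inr (j : 'I_n) : Kdeg (inr j : Kvert m n) = m.
Proof.
rewrite /Kdeg -sum1_card big_sumType /= [X in (_ + X)%N]big_pred0 //.
by rewrite addn0 sum1_card card_ord.
Qed.

Lemma laplacian_inl z i :
  laplacian z (inl i) = n%:Z * z (inl i) - \sum_(j < n) z (inr j).
Proof.
rewrite /laplacian big_sumType /= /Delta /=.
rewrite (eq_bigr (fun j => - z (inr j))) => [|j _]; last by rewrite sub0r mulrN1.
rewrite sumrN (bigD1 i) //= big1 ?addr0 => [|k ki]; last first.
  by rewrite inl_eq eq_sym (negbTE ki) subr0 mulr0.
by rewrite inl_eq eqxx Kdeg_inl mulrC.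
Qed.

Lemma laplacian_inr z j :
  laplacian z (inr j) = m%:Z * z (inr j) - \sum_(i < m) z (inl i).
Proof.
rewrite /laplacian big_sumType /= /Delta /=.
rewrite (eq_bigr (fun i => - z (inl i))) => [|i _]; last by rewrite sub0r mulrN1.
rewrite sumrN addrC (bigD1 j) //= big1 ?addr0 => [|k kj]; last first.
  by rewrite inr_eq eq_sym (negbTE kj) subr0 mulr0.
by rewrite inr_eq eqxx Kdeg_inr mulrC.
Qed.

Lemma degree_laplacian z : degree (laplacian z) = 0.
Proof.
rewrite /degree big_sumType /=.
under eq_bigr do rewrite laplacian_inl.
under [X in _ + X]eq_bigr do rewrite laplacian_inr.
rewrite !sumrB -!mulr_sumr !sumr_const !card_ord; ring.
Qed.

Lemma effective_ext D D' : D =1 D' -> effective D -> effective D'.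
Proof.
by move=> DD' [f [f_ge0 [z Dz]]]; exists f; split=> //; exists z => x; rewrite -DD'.
Qed.

Lemma effective_degree_ge0 D : effective D -> 0 <= degree D.
Proof.
move=> [f [f_ge0 [z Dz]]].
have -> : degree D = degree f + degree (laplacian z).
  by rewrite /degree -big_split /=; apply: eq_bigr => x _; rewrite /laplacian -Dz; ring.
by rewrite degree_laplacian addr0 sumr_ge0.
Qed.

Hypotheses (m_gt0 : (0 < m)%N) (n_gt0 : (0 < n)%N).

Lemma effectiveP D :
  effective D <-> exists s t, s <= floorA D t /\ t <= floorB D s.
Proof.
have nP : 0 < n%:Z by rewrite ltz_nat.
have mP : 0 < m%:Z by rewrite ltz_nat.
split=> [[f [f_ge0 [z Dz]]] | [s [t [s_le t_le]]]].
  exists (\sum_(i < m) z (inl i)), (\sum_(j < n) z (inr j)).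
  split; apply: ler_sum => x _; rewrite lez_divRL //.
    move: (f_ge0 (inl x)) (Dz (inl x)); rewrite -/(laplacian z _) laplacian_inl.
    by set S := \sum_(j < n) _; set Z := z _; set Y := D _; set X := f _; nia.
  move: (f_ge0 (inr x)) (Dz (inr x)); rewrite -/(laplacian z _) laplacian_inr.
  by set S := \sum_(i < m) _; set Z := z _; set Y := D _; set X := f _; nia.
(* Every vertex fires as often as it can afford; the surplus is returned at
   one vertex of each side. *)
pose excess (b : bool) (e : int) : int := if b then e else 0.
pose z x := match x with
  | inl i => ((D (inl i) + t) %/ n)%Z - excess (i == Ordinal m_gt0) (floorA D t - s)
  | inr j => ((D (inr j) + s) %/ m)%Z - excess (j == Ordinal n_gt0) (floorB D s - t)
  end.
have sum_excess k (k0 : 'I_k) e : \sum_(l < k) excess (l == k0) e = e.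
  by rewrite -big_mkcond big_pred1_eq.
have zA : \sum_(i < m) z (inl i) = s by rewrite sumrB sum_excess; ring.
have zB : \sum_(j < n) z (inr j) = t by rewrite sumrB sum_excess; ring.
exists (fun x => D x - laplacian z x); split; last by exists z => x; ring.
case=> [i|j]; rewrite ?laplacian_inl ?laplacian_inr ?zA ?zB /=.
  have := lez_floor (D (inl i) + t) (lt0r_neq0 nP).
  by rewrite /excess; case: eqP => _; nia.
have := lez_floor (D (inr j) + s) (lt0r_neq0 mP).
by rewrite /excess; case: eqP => _; nia.
Qed.

Lemma noneffective_floorB_lt D s t :
  ~ effective D -> s <= floorA D t -> floorB D s < t.
Proof.
by move=> nD s_le; rewrite ltNge; apply/negP => t_le; apply/nD/effectiveP; exists s, t.
Qed.

Lemma floorA_add_chip D a t :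
  floorA (fun x => D x + chip (inl a) x) t = floorA D t + (n %| D (inl a) + t + 1)%Z%:R.
Proof.
apply: (floor_sum_incr n_gt0) => [|i ia]; first by rewrite /chip inl_eq eqxx.
by rewrite /chip inl_eq (negbTE ia) addr0.
Qed.

Lemma floorB_sub_chip D w s :
  floorB (fun x => D x - chip (inr w) x) s = floorB D s - (m %| D (inr w) + s)%Z%:R.
Proof.
have Dw : D (inr w) - chip (inr w) (inr w) = D (inr w) - 1 by rewrite /chip inr_eq eqxx.
rewrite /floorB (floor_sum_incr m_gt0 (v := fun j => D (inr j) - chip (inr w) (inr j))
  (w := fun j => D (inr j)) (i := w)) /= ?Dw ?subrK //.
by rewrite (_ : D (inr w) - 1 + s + 1 = D (inr w) + s) ?addrK //; ring.
by move=> j jw; rewrite /chip inr_eq (negbTE jw) subr0.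
Qed.

Lemma floorB_add_chipA D a s : floorB (fun x => D x + chip (inl a) x) s = floorB D s.
Proof. by apply: eq_bigr => j _; rewrite /chip /= addr0. Qed.

Lemma floorA_sub_chipB D w t : floorA (fun x => D x - chip (inr w) x) t = floorA D t.
Proof. by apply: eq_bigr => i _; rewrite /chip /= subr0. Qed.

Lemma effective_add_chipA_jump D a :
  ~ effective D -> effective (fun x => D x + chip (inl a) x) ->
  exists t0, (n %| D (inl a) + t0 + 1)%Z /\ floorB D (floorA D t0 + 1) = t0.
Proof.
move=> nD /effectiveP [s0 [t0 []]].
rewrite floorA_add_chip floorB_add_chipA => s0_le t0_le.
have FDa_le : floorA D t0 + (n %| D (inl a) + t0 + 1)%Z%:R <= floorA D (t0 + 1).
  by rewrite -floorA_add_chip; apply: floor_sum_le => i; rewrite /chip; case: (_ == _); lia.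
have F_lt : floorA D t0 < s0.
  by rewrite ltNge; apply/negP => s0_le'; move: (noneffective_floorB_lt nD s0_le'); lia.
case: (boolP (n %| D (inl a) + t0 + 1)%Z) s0_le FDa_le => [dvd|_] /= s0_le FDa_le; last by lia.
exists t0; split=> //.
have := noneffective_floorB_lt nD (le_trans s0_le FDa_le).
have s0E : s0 = floorA D t0 + 1 by lia.
by move: t0_le; rewrite s0E; lia.
Qed.

(* Since floorA D (t + q n) = floorA D t + q m and floorB D (s + q m) =
   floorB D s + q n, a witness for the moved configuration would be a translate
   of (floorA D t0 + 1, t0), at which the chip removed from b_w is missing. *)
Lemma noneffective_move_chip D a w t0 :
  ~ effective D -> (n %| D (inl a) + t0 + 1)%Z -> floorB D (floorA D t0 + 1) = t0 ->
  (m %| D (inr w) + (floorA D t0 + 1))%Z ->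
  ~ effective (fun x => D x + chip (inl a) x - chip (inr w) x).
Proof.
move=> nD dvd_a Gs0 dvd_w.
pose Da x := D x + chip (inl a) x.
move=> /effectiveP [s [t []]].
rewrite -/(floorA (fun x => Da x - _) t) floorA_sub_chipB floorA_add_chip.
rewrite -/(floorB (fun x => Da x - _) s) floorB_sub_chip floorB_add_chipA.
rewrite /Da /chip /= addr0 => s_le t_le.
have F_lt : floorA D t < s.
  rewrite ltNge; apply/negP => s_le'; move: (noneffective_floorB_lt nD s_le').
  by case: (_ %| _)%Z t_le => /=; lia.
case: (boolP (n %| D (inl a) + t + 1)%Z) s_le => [dvd|_] /= s_le; last by lia.
have /dvdzP [q tE] : (n %| t - t0)%Z.
  by rewrite (_ : t - t0 = (D (inl a) + t + 1) - (D (inl a) + t0 + 1)) ?rpredB //; ring.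
have {}tE : t = t0 + q * n by rewrite -tE addrC subrK.
have sE : s = floorA D t0 + 1 + q * m.
  by move: s_le F_lt; rewrite tE /floorA floor_sumDM //; lia.
have dvd_s : (m %| D (inr w) + s)%Z.
  by rewrite sE addrA rpredD // dvdz_mull.
by move: t_le; rewrite dvd_s sE /floorB floor_sumDM // -/(floorB D _) Gs0 tE /=; lia.
Qed.

Lemma move_chip_AB D a :
  ~ effective D -> effective (fun x => D x + chip (inl a) x) ->
  exists w, ~ effective (fun x => D x + chip (inl a) x - chip (inr w) x).
Proof.
move=> nD Da_eff; have [t0 [dvd_a Gs0]] := effective_add_chipA_jump nD Da_eff.
have [w dvd_w] : exists w, (m %| D (inr w) + floorA D t0 + 1)%Z.
  apply: (floor_sum_jump m_gt0).
  change (floorB D (floorA D t0) < floorB D (floorA D t0 + 1)); rewrite Gs0.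
  exact: noneffective_floorB_lt.
by exists w; apply: noneffective_move_chip dvd_a Gs0 _; rewrite // addrA.
Qed.

End CompleteBipartite.

Section RankProofs.
Variables m n : nat.
Hypotheses (m_gt0 : (0 < m)%N) (n_gt0 : (0 < n)%N).
Implicit Types (D f g h u : config m n).

Definition min_rank_proof u g := [/\ nonneg g, ~ effective (csub u g) &
  forall h, nonneg h -> ~ effective (csub u h) -> degree g <= degree h].

Lemma min_rank_proof_rank_proof u g : min_rank_proof u g -> rank_proof u g.
Proof.
case=> g_ge0 g_ne g_min; do 2!split=> //.
exists (degree g - 1); rewrite subrK; split=> //.
split=> [|f f_ge0 f_ne]; first by exists g; rewrite subrK.
by rewrite subrK; exact: g_min.
Qed.

Lemma degree_ge0 f : nonneg f -> 0 <= degree f.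
Proof. by move=> f_ge0; apply: sumr_ge0. Qed.

Lemma degree_chip (c : Kvert m n) : degree (chip c) = 1.
Proof.
by rewrite /degree (bigD1 c) //= big1 => [|x /negbTE xc]; rewrite /chip ?eqxx ?xc ?addr0.
Qed.

Lemma degree_add_chip f c : degree (fun x => f x + chip c x) = degree f + 1.
Proof. by rewrite /degree big_split /= -/(degree (chip c)) degree_chip. Qed.

Lemma degree_sub_chip f c : degree (fun x => f x - chip c x) = degree f - 1.
Proof. by rewrite /degree big_split /= sumrN -/(degree (chip c)) degree_chip. Qed.

Lemma degree_csub f g : degree (csub f g) = degree f - degree g.
Proof. exact: sumrB. Qed.

Lemma nonneg_add_chip f c : nonneg f -> nonneg (fun x => f x + chip c x).
Proof. by move=> f_ge0 x; rewrite /chip; move: (f_ge0 x); case: (_ == _); lia. Qed.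

Lemma exists_min_rank_proof u : nonneg u -> exists g, min_rank_proof u g.
Proof.
move=> u_ge0.
pose P k := exists h, [/\ nonneg h, ~ effective (csub u h) & degree h = k%:Z].
have P_inh : exists k, P k.
  pose h := fun x => u x + chip (inl (Ordinal m_gt0)) x.
  have h_ge0 : nonneg h by exact: nonneg_add_chip.
  exists (absz (degree h)), h; split; rewrite ?gez0_abs ?degree_ge0 //.
  by move/effective_degree_ge0; rewrite degree_csub degree_add_chip; lia.
have [k [[[g [g_ge0 g_ne degE]] k_min] _]] :=
  dec_inh_nat_subset_has_unique_least_element P (fun k => classic (P k)) P_inh.
exists g; split=> // h h_ge0 h_ne; rewrite degE.
have /k_min/ssrnat.leP : P (absz (degree h)) by exists h; rewrite gez0_abs ?degree_ge0.
by rewrite -lez_nat gez0_abs ?degree_ge0.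
Qed.

Lemma min_rank_proof_neq0 u g : nonneg u -> min_rank_proof u g -> exists x, 0 < g x.
Proof.
move=> u_ge0 [g_ge0 g_ne _]; apply: NNPP => /not_ex_all_not g_le0; apply: g_ne.
exists (csub u g); split.
  by move=> x; rewrite /csub; move: (u_ge0 x) (g_ge0 x) (g_le0 x); rewrite ltNge; lia.
by exists (fun=> 0) => x; rewrite subrr big1 // => c _; rewrite mul0r.
Qed.

Lemma min_rank_proof_move_chip u g a : min_rank_proof u g -> 0 < g (inl a) ->
  exists w, min_rank_proof u (fun x => g x - chip (inl a) x + chip (inr w) x).
Proof.
move=> [g_ge0 g_ne g_min] ga_gt0.
have g'_ge0 : nonneg (fun x => g x - chip (inl a) x).
  by move=> x; rewrite /chip; case: eqP => [->|_]; move: (g_ge0 x); lia.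
have g'_eff : effective (fun x => csub u g x + chip (inl a) x).
  apply: NNPP => g'_ne; move: (g_min _ g'_ge0); rewrite degree_sub_chip.
  suff : ~ effective (csub u (fun x => g x - chip (inl a) x)) by move=> /[swap]/[apply]; lia.
  by apply: contra_not g'_ne; apply: effective_ext => x; rewrite /csub; ring.
have [w gw_ne] := move_chip_AB m_gt0 n_gt0 g_ne g'_eff.
exists w; split; first by apply: nonneg_add_chip.
  by apply: contra_not gw_ne; apply: effective_ext => x; rewrite /csub; ring.
by move=> h h_ge0 h_ne; rewrite degree_add_chip degree_sub_chip subrK; exact: g_min.
Qed.

Definition permB (p : {perm 'I_n}) (x : Kvert m n) : Kvert m n :=
  match x with inl i => inl i | inr j => inr (p j) end.

Lemma permBK p : cancel (permB p) (permB p^-1).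
Proof. by case=> [i|j] //=; rewrite permK. Qed.

Lemma effective_permB p D : effective D -> effective (fun x => D (permB p x)).
Proof.
move=> /(effectiveP m_gt0 n_gt0) [s [t [s_le t_le]]].
apply/(effectiveP m_gt0 n_gt0); exists s, t; split=> //.
by move: t_le; rewrite /floorB /floor_sum (reindex_inj (@perm_inj _ p)).
Qed.

Lemma degree_permB p f : degree (fun x => f (permB p x)) = degree f.
Proof. by rewrite /degree !big_sumType /= [in RHS](reindex_inj (@perm_inj _ p)). Qed.

Lemma min_rank_proof_permB p u g : (forall x, u (permB p x) = u x) ->
  min_rank_proof u g -> min_rank_proof u (fun x => g (permB p x)).
Proof.
move=> u_p [g_ge0 g_ne g_min]; split=> [x | | h h_ge0 h_ne]; first exact: g_ge0.
  move/(effective_permB p^-1); apply: contra_not g_ne; apply: effective_ext => x.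
  by rewrite /csub -[in RHS](permBK p^-1 x) invgK u_p.
by rewrite degree_permB; exact: g_min.
Qed.

Lemma min_rank_proof_add_chip u g f c :
  min_rank_proof (fun x => u x - chip c x) g -> min_rank_proof u f -> 0 < f c ->
  min_rank_proof u (fun x => g x + chip c x).
Proof.
move=> [g_ge0 g_ne g_min] [f_ge0 f_ne f_min] fc_gt0.
split; first exact: nonneg_add_chip.
  by apply: contra_not g_ne; apply: effective_ext => x; rewrite /csub; ring.
move=> h h_ge0 h_ne; rewrite degree_add_chip.
have f'_ge0 : nonneg (fun x => f x - chip c x).
  by move=> x; rewrite /chip; case: eqP => [->|_]; move: (f_ge0 x); lia.
have f'_ne : ~ effective (csub (fun x => u x - chip c x) (fun x => f x - chip c x)).
  by apply: contra_not f_ne; apply: effective_ext => x; rewrite /csub; ring.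
by move: (g_min _ f'_ge0 f'_ne) (f_min _ h_ge0 h_ne); rewrite degree_sub_chip; lia.
Qed.

Lemma exists_min_rank_proof_chipB u : nonneg u ->
  exists g w, min_rank_proof u g /\ 0 < g (inr w).
Proof.
move=> u_ge0; have [f fmin] := exists_min_rank_proof u_ge0; have [f_ge0 _ _] := fmin.
have [[a|w] fx_gt0] := min_rank_proof_neq0 u_ge0 fmin; last by exists f, w.
have [w gmin] := min_rank_proof_move_chip fmin fx_gt0.
exists (fun x => f x - chip (inl a) x + chip (inr w) x), w; split=> //.
by move: (f_ge0 (inr w)); rewrite /chip inr_eq eqxx /=; lia.
Qed.

Lemma exists_min_rank_proof_at u b : nonneg u -> u (inr b) = 0 ->
  exists g, min_rank_proof u g /\ 0 < g (inr b).
Proof.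
have [k degE] : exists k, absz (degree u) = k by eexists.
elim/ltn_ind: k u degE => k IH u degE u_ge0 ub.
have [f [w [fmin fw_gt0]]] := exists_min_rank_proof_chipB u_ge0.
have [<-|wb] := eqVneq w b; first by exists f.
have [uw|uw] := eqVneq (u (inr w)) 0.
  exists (fun x => f (permB (tperm w b) x)); split; last by rewrite /= tpermR.
  apply: min_rank_proof_permB fmin => -[i|j] //=.
  by case: tpermP => [->|->|] //; rewrite ub uw.
pose u' x := u x - chip (inr w) x.
have u'_ge0 : nonneg u'.
  have uw_gt0 : 0 < u (inr w) by rewrite lt0r uw u_ge0.
  by move=> x; rewrite /u' /chip; case: eqP => [->|_]; move: (u_ge0 x); lia.
have [g [gmin gb_gt0]] : exists g, min_rank_proof u' g /\ 0 < g (inr b).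
  apply: (IH (absz (degree u'))) => //.
    rewrite -degE -ltz_nat !gez0_abs ?degree_ge0 // /u' degree_sub_chip; lia.
  by rewrite /u' /chip inr_eq eq_sym (negbTE wb) subr0.
exists (fun x => g x + chip (inr w) x); split.
  exact: min_rank_proof_add_chip gmin fmin fw_gt0.
by rewrite /chip inr_eq eq_sym (negbTE wb) addr0.
Qed.
End RankProofs.

Theorem lemma8p3 (m n : nat) (hm : (1 <= m)%N) (hn : (1 <= n)%N)
  (u : config m n) (hu : nonneg u) (i : 'I_n) (hui : u (inr i) = 0) :
  exists g : config m n, rank_proof u g /\ 0 < g (inr i).
Proof.
have [g [gmin gi]] := exists_min_rank_proof_at hm hn hu hui.
by exists g; split=> //; exact: min_rank_proof_rank_proof.
Qed.
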